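(* Let $I=1$ and let $\mathbf s_{T,u}^{\mathrm T}$ denote the $u$-th row of $\mathbf S_T$ for some $u\in\{1,\dots,U\}$. Suppose the jammer transmits $\mathbf w_T=\mathbf s_{T,u}$ during the pilot phase and some fixed $\mathbf w_D\in\mathcal S^D$ during the data phase (so $\|\mathbf w_D\|_0=D$). If $\mathbf S_D$ is uniformly distributed on $\mathcal S^{U\times D}$, then the jammer is eclipsed (with channel estimation) with probability at least $1-4^{-D}$.
   Context: Let $U,T,D$ be positive integers with $T\ge U$, $\mathcal S=\{(\pm1\pm i)/\sqrt2\}\subset\mathbb C$ (QPSK), and $\mathbf S_T\in\mathbb C^{U\times T}$ a fixed pilot matrix of full row rank $U$; $\mathbf A^\dagger$ is the Moore–Penrose pseudoinverse. Eclipsing with channel estimation (single-antenna case): given $\mathbf S_D\in\mathcal S^{U\times D}$, $\mathbf w_T\in\mathbb C^T$, $\mathbf w_D\in\mathbb C^D$, the jammer is eclipsed if there exists $\tilde{\mathbf S}_D\in\mathcal S^{U\times D}\setminus\{\mathbf S_D\}$ such that $\begin{bmatrix}\mathbf S_D-\tilde{\mathbf S}_D\\ \mathbf w_D^{\mathrm T}-\mathbf w_T^{\mathrm T}\mathbf S_T^\dagger\tilde{\mathbf S}_D\end{bmatrix}$ has rank at most $1$. *)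

From HB Require Import structures.
From mathcomp Require Import all_boot all_order all_algebra all_field.
Set Implicit Arguments. Unset Strict Implicit. Unset Printing Implicit Defensive.
Import Order.TTheory GRing.Theory Num.Theory.
Local Open Scope ring_scope.

Definition qpsk (b : bool * bool) : algC :=
  ((if b.1 then 1 else -1) + (if b.2 then 1 else -1) * 'i) / sqrtC 2.

Definition is_qpsk (x : algC) : bool := [exists b, x == qpsk b].

Definition ctrmx (m n : nat) (A : 'M[algC]_(m, n)) : 'M[algC]_(n, m) :=
  (map_mx Num.conj A)^T.

Definition is_mp_pinv (m n : nat) (A : 'M[algC]_(m, n)) (X : 'M[algC]_(n, m)) : Prop :=
  [/\ A *m X *m A = A, X *m A *m X = X,
      ctrmx (A *m X) = A *m X & ctrmx (X *m A) = X *m A].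

(* Eclipsing with channel estimation, single-antenna case.
   SDt ranges over S^{U x D} \ {SD}, encoded by sign-pair matrices. *)
Definition eclipsed (U T D : nat) (STdag : 'M[algC]_(T, U))
  (SD : 'M[algC]_(U, D)) (wT : 'cV[algC]_T) (wD : 'cV[algC]_D) : bool :=
  [exists B : 'M[bool * bool]_(U, D),
     (map_mx qpsk B != SD) &&
     (\rank (col_mx (SD - map_mx qpsk B) (wD^T - wT^T *m STdag *m map_mx qpsk B)) <= 1)%N].

(* Let b be the sign pattern of the jammer's data w_D.  Whenever row u of the
   user data S_D differs from b, replace that row by b to obtain a competing
   message S~_D.  The difference S_D - S~_D is then supported on row u, and
   since S_T S_T^+ = I the jammer row w_D^T - s_{T,u}^T S_T^+ S~_D equals
   w_D^T - row u of S~_D = 0, so the stacked matrix has rank at most 1.  The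
   exceptional event "row u of S_D equals b" has probability 4^-D. *)
From HB Require Import structures.
From mathcomp Require Import all_boot all_order all_algebra all_field.
Import Order.TTheory GRing.Theory Num.Theory.
Local Open Scope ring_scope.

Lemma qpsk_inj : injective qpsk.
Proof.
pose sgn (b : bool) : algC := if b then 1 else -1.
have sgn_real b : sgn b \is Num.real by case: b; rewrite /sgn ?realN real1.
have sgn_inj : injective sgn.
  have one_neq_m1 : (1 : algC) != -1.
    by rewrite -subr_eq0 opprK -(natrD _ 1 1) pnatr_eq0.
  by case=> [] [] //= /eqP; rewrite ?(negbTE one_neq_m1) // eq_sym (negbTE one_neq_m1).
have s2_neq0 : sqrtC 2 != 0 :> algC by rewrite sqrtC_eq0 pnatr_eq0.
move=> [a b] [c d] /(congr1 (fun x => x * sqrtC 2)); rewrite !divfK //= => e.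
have := congr1 (fun x => 'Re x) e; have := congr1 (fun x => 'Im x) e.
rewrite /= ![_ * 'i]mulrC !Re_rect ?Im_rect ?sgn_real //.
by move=> /sgn_inj -> /sgn_inj ->.
Qed.

Lemma mulmx_mp_pinv (m n : nat) (A : 'M[algC]_(m, n)) (X : 'M[algC]_(n, m)) :
  row_free A -> is_mp_pinv A X -> A *m X = 1%:M.
Proof.
move=> /row_freeP [B AB1] [AXA _ _ _].
by have := congr1 (mulmx^~ B) AXA; rewrite -!mulmxA AB1 !mulmx1.
Qed.

Lemma mxrank_row_support1 {F : fieldType} {m n : nat} (M : 'M[F]_(m, n)) (i0 : 'I_m) :
  (forall i, i != i0 -> row i M = 0) -> (\rank M <= 1)%N.
Proof.
move=> M_supp.
have -> : M = (delta_mx i0 0 : 'cV_m) *m row i0 M.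
  apply/matrixP => i j; rewrite !mxE big_ord1 !mxE eqxx andbT.
  have [->|ne] := eqVneq i i0; first by rewrite mul1r.
  by have /rowP /(_ j) := M_supp i ne; rewrite !mxE mul0r => ->.
exact: leq_trans (mxrankM_maxl _ _) (rank_leq_col _).
Qed.

Section SetRow.

Context {T : Type} {m n : nat} (i0 : 'I_m).

Definition set_row (r : 'rV[T]_n) (M : 'M[T]_(m, n)) : 'M[T]_(m, n) :=
  \matrix_(i, j) if i == i0 then r 0 j else M i j.

Lemma row_set_row r M : row i0 (set_row r M) = r.
Proof. by apply/rowP => j; rewrite !mxE eqxx. Qed.

Lemma set_row_set_row r r' M : set_row r (set_row r' M) = set_row r M.
Proof. by apply/matrixP => i j; rewrite !mxE; case: eqP. Qed.

Lemma set_rowK M : set_row (row i0 M) M = M.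
Proof. by apply/matrixP => i j; rewrite !mxE; case: eqP => [->|]. Qed.

End SetRow.

Lemma card_row_fixed {T : finType} {m n : nat} (i0 : 'I_m) (r : 'rV[T]_n) :
  (#|[set M : 'M[T]_(m, n) | row i0 M == r]| * #|T| ^ n = #|{: 'M[T]_(m, n)}|)%N.
Proof.
set Fix := [set M | _].
pose f (p : 'rV[T]_n * 'M[T]_(m, n)) := set_row i0 p.1 p.2.
have f_inj : {in setX [set: 'rV_n] Fix &, injective f}.
  move=> [a M] [b N]; rewrite !inE /= => /eqP rowM /eqP rowN; rewrite /f /= => eq_f.
  have -> : a = b by rewrite -(row_set_row i0 a M) -(row_set_row i0 b N) eq_f.
  rewrite -(set_rowK i0 M) -(set_rowK i0 N) rowM rowN.
  by rewrite -(set_row_set_row i0 r a M) -(set_row_set_row i0 r b N) eq_f.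
have f_onto : f @: setX [set: 'rV_n] Fix = [set: 'M_(m, n)].
  apply/eqP; rewrite eqEsubset subsetT /=; apply/subsetP => M _.
  apply/imsetP; exists (row i0 M, set_row i0 r M).
    by rewrite !inE /= row_set_row eqxx.
  by rewrite /f /= set_row_set_row set_rowK.
by rewrite -[RHS]cardsT -f_onto card_in_imset // cardsX cardsT card_mx mul1n mulnC.
Qed.

Lemma eclipsed_row_mismatch (U T D : nat) (ST : 'M[algC]_(U, T)) (STdag : 'M[algC]_(T, U))
  (u : 'I_U) (b : 'rV[bool * bool]_D) (B : 'M[bool * bool]_(U, D)) :
  ST *m STdag = 1%:M -> row u B != b ->
  eclipsed STdag (map_mx qpsk B) (row u ST)^T (map_mx qpsk b)^T.
Proof.
move=> STdagK rowBb; apply/existsP; exists (set_row u b B); apply/andP; split.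
  apply: contra rowBb => /eqP /(congr1 (row u)); rewrite -!map_row row_set_row.
  by move/rowP=> eq_map; apply/eqP/rowP => j; apply: qpsk_inj; have := eq_map j; rewrite !mxE.
rewrite !trmxK -row_mul STdagK -row_mul mul1mx -map_row row_set_row subrr.
rewrite rank_col_mx0; apply: (mxrank_row_support1 _ u) => i ne_iu.
by apply/rowP => j; rewrite !mxE (negbTE ne_iu) subrr.
Qed.

Lemma ler_ratio_complement (F : numFieldType) (e b N k : nat) :
  (0 < N)%N -> (b * k = N)%N -> (N <= e + b)%N ->
  1 - (k%:R)^-1 <= e%:R / N%:R :> F.
Proof.
move=> N_gt0 bkN NleEB.
have k_gt0 : (0 < k)%N by move: N_gt0; rewrite -bkN muln_gt0 => /andP[].
rewrite ler_pdivlMr ?ltr0n // mulrBl mul1r -bkN natrM mulrCA mulVf ?pnatr_eq0 -?lt0n //.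
by rewrite mulr1 -natrM bkN lerBlDr -natrD ler_nat.
Qed.

Theorem theorem4 (U T D : nat) (hU : (0 < U)%N) (hD : (0 < D)%N) (hTU : (U <= T)%N)
  (ST : 'M[algC]_(U, T)) (hST : \rank ST = U)
  (STdag : 'M[algC]_(T, U)) (hdag : is_mp_pinv ST STdag)
  (u : 'I_U) (wD : 'cV[algC]_D) (hwD : forall j, is_qpsk (wD j 0)) :
  ((#|[set B : 'M[bool * bool]_(U, D) |
        eclipsed STdag (map_mx qpsk B) (row u ST)^T wD]|%:R
    / #|{: 'M[bool * bool]_(U, D)}|%:R : rat)
   >= 1 - (4%:R ^- D : rat)).
Proof.
have [b wDb] : exists b : 'rV_D, wD = (map_mx qpsk b)^T.
  have /fin_all_exists [f hf] j : exists c, wD j 0 = qpsk c.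
    by have /existsP [c /eqP ->] := hwD j; exists c.
  by exists (\row_j f j); apply/matrixP => j i; rewrite !mxE ord1 hf.
have STdagK : ST *m STdag = 1%:M by apply: mulmx_mp_pinv; rewrite // /row_free hST.
set E := [set B | _]; set Bad := [set B : 'M_(U, D) | row u B == b].
have BadC_sub : ~: Bad \subset E.
  apply/subsetP => B; rewrite !inE wDb; exact: eclipsed_row_mismatch.
rewrite -natrX; apply: ler_ratio_complement.
- by rewrite card_mx card_prod card_bool expn_gt0.
- by rewrite -(card_row_fixed u b) card_prod card_bool.
- by rewrite -(cardsC Bad) addnC leq_add2r subset_leq_card.
Qed.
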